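(* Let $\varphi:\mathbb{Z}^2\to S^4$ be a circular net. Then there exists a complex two-parameter family of principal contact element nets congruent to $\varphi$.
   Context: $\mathbb{H}$ denotes the quaternions, $\mathbb{C}=\mathrm{span}_{\mathbb{R}}\{1,i\}\subset\mathbb{H}$; $\mathbb{H}^2$ (right $\mathbb{H}$-vector space) $\cong\mathbb{C}^4$, right multiplication by $j$ being $\mathbb{C}$-antilinear. $S^4\cong\mathbb{HP}^1=\{v\mathbb{H}\}$, $\mathbb{CP}^3=\mathbb{P}(\mathbb{C}^4)$; the twistor fibre over $v\mathbb{H}$ is the projective line through $[v],[vj]$. $Q^4=\{[\alpha]\in\mathbb{P}(\Lambda^2\mathbb{C}^4):\alpha\wedge\alpha=0\}$ is the Plücker quadric; $[v\wedge w]$ is identified with the projective line of $\mathbb{CP}^3$ through $[v],[w]$. The antilinear extension of $v\wedge w\mapsto vj\wedge wj$ gives a real structure $j$ on $Q^4$ whose fixed (''real'') points are the twistor fibres $[v\wedge vj]$, and $v\mathbb{H}\mapsto[v\wedge vj]$ identifies $S^4$ with this real set; non-real points of $Q^4$ are twistor lifts of round two-spheres with conformal structure. A null line is a projective line contained in $Q^4$. A contact element is a null line containing a real point (it parametrizes the two-spheres touching one another at that point, together with the point). A circular net $\varphi:\mathbb{Z}^2\to S^4$ is a map such that the four points of each elementary face lie on a circle (equivalently, their real points in $Q^4$ lie in a projective plane). A principal contact element net is a map $\Phi$ from $\mathbb{Z}^2$ to the set of null lines of $Q^4$ such that each $\Phi(m,n)$ is a contact element, the real points of the $\Phi(m,n)$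 are distinct, and $\Phi(m,n)\cap\Phi(m+1,n)\neq\emptyset$, $\Phi(m,n)\cap\Phi(m,n+1)\neq\emptyset$ for all $(m,n)$. $\Phi$ is congruent to $\varphi:\mathbb{Z}^2\to S^4$ if for each $k\in\mathbb{Z}^2$ the point $\varphi(k)$ (as a real point of $Q^4$) lies on $\Phi(k)$. *)

From HB Require Import structures.
From mathcomp Require Import all_boot all_order all_algebra.
From mathcomp Require Import reals.
From mathcomp.real_closed Require Import complex.
Set Implicit Arguments. Unset Strict Implicit. Unset Printing Implicit Defensive.
Import Order.TTheory GRing.Theory Num.Theory.
Local Open Scope ring_scope.

Section Twistor.
Variable R : realType.
Local Notation C := R[i].

(* H^2 as C^4.  A quaternion is written q = z1 + j z2 (z1, z2 in C), so
   that right multiplication by a complex number is C-linear; a vector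
   (q1, q2) of H^2 is the vector (z1, z2, z3, z4) of C^4 where
   q1 = z1 + j z2, q2 = z3 + j z4.  Right multiplication by j is then the
   C-antilinear map  (z1,z2,z3,z4) |-> (-conj z2, conj z1, -conj z4, conj z3).       *)
Definition rightj (v : 'rV[C]_4) : 'rV[C]_4 :=
  \row_(i < 4)
    match val i with
    | 0%N => - Num.conj (v 0 (inord 1))
    | 1%N => Num.conj (v 0 (inord 0))
    | 2%N => - Num.conj (v 0 (inord 3))
    | _   => Num.conj (v 0 (inord 2))
    end.

(* Lambda^2 C^4 = C^6 with basis e01, e02, e03, e12, e13, e23 (indices 0..5). *)
Definition plA (k : 'I_6) : 'I_4 :=
  inord (match val k with 0%N | 1%N | 2%N => 0 | 3%N | 4%N => 1 | _ => 2 end)%N.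
Definition plB (k : 'I_6) : 'I_4 :=
  inord (match val k with 0%N => 1 | 1%N => 2 | 2%N => 3 | 3%N => 2
                          | 4%N => 3 | _ => 3 end)%N.

Definition wedge (v w : 'rV[C]_4) : 'rV[C]_6 :=
  \row_(k < 6) (v 0 (plA k) * w 0 (plB k) - v 0 (plB k) * w 0 (plA k)).

(* alpha /\ alpha = 2 * plq alpha * e0123 *)
Definition plq (a : 'rV[C]_6) : C :=
  a 0 (inord 0) * a 0 (inord 5) - a 0 (inord 1) * a 0 (inord 4)
  + a 0 (inord 2) * a 0 (inord 3).

(* the Pluecker quadric Q^4 (as a cone in C^6) *)
Definition inQ (a : 'rV[C]_6) : Prop := plq a = 0.

(* the real point [v /\ vj] of Q^4 attached to the point vH of S^4 = HP^1 *)
Definition realpt (v : 'rV[C]_4) : 'rV[C]_6 := wedge v (rightj v).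

Definition distinctS4 (v w : 'rV[C]_4) : Prop :=
  ~~ (realpt v == realpt w)%MS.

(* Projective lines of P(Lambda^2 C^4) are represented by 2x6 matrices of
   rank 2 (their row space); equality of lines is (L == L')%MS. *)
Definition null_line (L : 'M[C]_(2,6)) : Prop :=
  \rank L = 2%N /\ forall x : 'rV[C]_6, (x <= L)%MS -> inQ x.

Definition has_real_point (L : 'M[C]_(2,6)) (v : 'rV[C]_4) : Prop :=
  v != 0 /\ (realpt v <= L)%MS.

Definition contact_element (L : 'M[C]_(2,6)) : Prop :=
  null_line L /\ exists v, has_real_point L v.

Definition lines_meet (L L' : 'M[C]_(2,6)) : Prop :=
  (0 < \rank (L :&: L')%MS)%N.

(* Nets on Z^2.  A map Z^2 -> S^4 is given by nonzero representatives
   phi m n in C^4 of the quaternionic lines (phi m n) H. *)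

Definition four_distinct (a b c d : 'rV[C]_4) : Prop :=
  [/\ distinctS4 a b, distinctS4 a c & distinctS4 a d] /\
  [/\ distinctS4 b c, distinctS4 b d & distinctS4 c d].

Definition coplanar4 (a b c d : 'rV[C]_4) : Prop :=
  (\rank (col_mx (col_mx (realpt a) (realpt b))
                 (col_mx (realpt c) (realpt d))) <= 3)%N.

Definition circular_net (phi : int -> int -> 'rV[C]_4) : Prop :=
  (forall m n, phi m n != 0) /\
  forall m n,
    four_distinct (phi m n) (phi (m + 1) n) (phi (m + 1) (n + 1)) (phi m (n + 1))
    /\ coplanar4 (phi m n) (phi (m + 1) n) (phi (m + 1) (n + 1)) (phi m (n + 1)).

Definition distinct_real_points (L L' : 'M[C]_(2,6)) : Prop :=
  forall v w, has_real_point L v -> has_real_point L' w -> distinctS4 v w.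

Definition principal_contact_element_net (Phi : int -> int -> 'M[C]_(2,6)) : Prop :=
  forall m n,
    [/\ contact_element (Phi m n),
        distinct_real_points (Phi m n) (Phi (m + 1) n),
        distinct_real_points (Phi m n) (Phi m (n + 1)),
        lines_meet (Phi m n) (Phi (m + 1) n)
      & lines_meet (Phi m n) (Phi m (n + 1))].

Definition congruent (Phi : int -> int -> 'M[C]_(2,6)) (phi : int -> int -> 'rV[C]_4) : Prop :=
  forall m n, (realpt (phi m n) <= Phi m n)%MS.

End Twistor.

(* The real points of the Pluecker quadric form a definite sphere: two real
   points are polar to each other only if they coincide.  Given a null line L
   through a point q of the quadric and a null point p not polar to q, there is
   exactly one null line through p meeting L, spanned by p and the point of L
   polar to p.  Hence a principal contact element net congruent to phi is
   determined by its value at (0,0), and it exists because transferring a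
   contact element along the two paths around an elementary face gives the
   same line: the coplanarity of the four real points makes the two results
   differ by a multiple of a term that vanishes on the quadric. *)

From HB Require Import structures.
From mathcomp Require Import all_boot all_order all_algebra.
From mathcomp Require Import reals.
From mathcomp.real_closed Require Import complex.
From mathcomp Require Import ring zify.
Set Implicit Arguments. Unset Strict Implicit. Unset Printing Implicit Defensive.
Import Order.TTheory GRing.Theory Num.Theory.
Local Open Scope ring_scope.

Lemma int_succ_rect (Q : int -> Type) : Q 0 -> (forall m, Q m -> Q (m + 1)) ->
  (forall m, Q (m + 1) -> Q m) -> forall m, Q m.
Proof.
move=> Q0 QS QP; elim/int_rect => // n Qn.
  by rewrite (_ : n.+1%:Z = n%:Z + 1); [exact: QS | lia].
by apply: QP; rewrite (_ : - n.+1%:Z + 1 = - n%:Z) //; lia.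
Qed.

Lemma NegzS_add1 k : Negz k.+1 + 1 = Negz k.
Proof. by rewrite !NegzE; lia. Qed.

Section RowSpans.
Variables (F : fieldType) (n : nat).

Lemma sub_col_mxl m1 m2 (A : 'M[F]_(m1, n)) (B : 'M_(m2, n)) : (A <= col_mx A B)%MS.
Proof. by rewrite -addsmxE addsmxSl. Qed.

Lemma sub_col_mxr m1 m2 (A : 'M[F]_(m1, n)) (B : 'M_(m2, n)) : (B <= col_mx A B)%MS.
Proof. by rewrite -addsmxE addsmxSr. Qed.

Lemma sub_col_mx_rowP m (A : 'M[F]_(m, n)) (v x : 'rV_n) :
  (x <= col_mx A v)%MS <-> exists2 y, (y <= A)%MS & exists k, x = y + k *: v.
Proof.
split; last first.
  move=> [y yA [k ->]]; apply: addmx_sub; first exact: submx_trans yA (sub_col_mxl _ _).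
  exact/scalemx_sub/sub_col_mxr.
rewrite -addsmxE => /sub_addsmxP[[u1 u2] /= ->].
exists (u1 *m A); first exact: submxMl.
by exists (u2 0 0); rewrite {1}[u2]mx11_scalar mul_scalar_mx.
Qed.

Lemma span2P (a b x : 'rV[F]_n) :
  (x <= col_mx a b)%MS <-> exists s t, x = s *: a + t *: b.
Proof.
rewrite sub_col_mx_rowP; split=> [[y /sub_rVP[s ->] [t ->]] | [s [t ->]]].
  by exists s, t.
by exists (s *: a); [exact/scalemx_sub/submx_refl | exists t].
Qed.

Lemma rank_col_mx_row m (A : 'M[F]_(m, n)) (v : 'rV_n) :
  ~~ (v <= A)%MS -> \rank (col_mx A v) = (\rank A).+1.
Proof.
move=> nvA; have vnz : v != 0 by apply: contraNneq nvA => ->; exact: sub0mx.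
rewrite -(addsmxE A v).
have := mxrank_sum_cap A v; rewrite rank_rV vnz.
suff -> : \rank (A :&: v)%MS = 0%N by rewrite addn0 addn1.
apply/eqP; apply: contraR nvA; rewrite -lt0n => rk.
have /eqmxP <- : (A :&: v == v)%MS.
  by rewrite -(geq_leqif (mxrank_leqif_eq (capmxSr A v))) rank_rV vnz.
exact: capmxSl.
Qed.

Lemma eqmx_sub_rank m1 m2 (A : 'M[F]_(m1, n)) (B : 'M_(m2, n)) :
  (A <= B)%MS -> (\rank B <= \rank A)%N -> (A :=: B)%MS.
Proof.
by move=> sAB leBA; apply/eqmxP; rewrite -(geq_leqif (mxrank_leqif_eq sAB)).
Qed.

Definition free2 (a b : 'rV[F]_n) := forall s t, s *: a + t *: b = 0 -> s = 0 /\ t = 0.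

Lemma free2P (a b : 'rV[F]_n) : free2 a b <-> \rank (col_mx a b) = 2%N.
Proof.
split=> [fr | r2 s t].
  have anz : a != 0.
    apply/eqP => a0; have := fr 1 0; rewrite a0 scaler0 scale0r addr0.
    by move=> /(_ erefl)[/eqP]; rewrite oner_eq0.
  rewrite rank_col_mx_row ?rank_rV ?anz //; apply/negP => /sub_rVP[k bk].
  have := fr k (-1); rewrite bk scaleN1r subrr => /(_ erefl)[_ /eqP].
  by rewrite oppr_eq0 oner_eq0.
have [->|tnz] := eqVneq t 0.
  rewrite scale0r addr0 => /eqP; rewrite scaler_eq0 => /orP[/eqP // | /eqP a0].
  by move: r2; rewrite a0 -addsmxE adds0mx rank_rV; case: (b != 0).
move=> e; suff ba : (b <= a)%MS.
  have ea : (a :=: col_mx a b)%MS.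
    by apply: eqmx_sub_rank (sub_col_mxl a b) _; rewrite mxrankS // col_mx_sub submx_refl ba.
  by move: r2; rewrite -ea rank_rV; case: (a != 0).
apply/sub_rVP; exists (- s / t); apply: (scalerI tnz).
by rewrite scalerA mulrC divfK // scaleNr; apply/eqP; rewrite -addr_eq0 addrC e.
Qed.

Lemma col_mx_rows2 (L : 'M[F]_(2, n)) : col_mx (row 0 L) (row 1 L) = L.
Proof.
apply/matrixP => i j; rewrite mxE; case: splitP => k Hk; rewrite !mxE;
by congr (L _ j); apply/val_inj; rewrite /= Hk (ord1 k).
Qed.

End RowSpans.

Section Twistor.
Variable R : realType.
Local Notation C := R[i].
Local Notation "x ~6 k" := (x 0 (@inord 5 k)) (at level 10).
Local Notation "x ~4 k" := (x 0 (@inord 3 k)) (at level 10).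
Local Notation cj := (@Num.conj C).

Lemma row6_eq (x y : 'rV[C]_6) :
  x ~6 0 = y ~6 0 -> x ~6 1 = y ~6 1 -> x ~6 2 = y ~6 2 ->
  x ~6 3 = y ~6 3 -> x ~6 4 = y ~6 4 -> x ~6 5 = y ~6 5 -> x = y.
Proof.
have E j (Hj : (j < 6)%N) : Ordinal Hj = inord j by apply/val_inj; rewrite /= inordK.
by move=> *; apply/rowP => -[[|[|[|[|[|[|//]]]]]] Hk]; rewrite E.
Qed.

Lemma row4_eq (x y : 'rV[C]_4) :
  x ~4 0 = y ~4 0 -> x ~4 1 = y ~4 1 -> x ~4 2 = y ~4 2 -> x ~4 3 = y ~4 3 -> x = y.
Proof.
have E j (Hj : (j < 4)%N) : Ordinal Hj = inord j by apply/val_inj; rewrite /= inordK.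
by move=> *; apply/rowP => -[[|[|[|[|//]]]] Hk]; rewrite E.
Qed.

Lemma mul_conj_add_eq0 (x y : C) : x * cj x + y * cj y = 0 -> x = 0 /\ y = 0.
Proof.
rewrite -!normCK => /eqP; rewrite paddr_eq0 ?exprn_ge0 //.
by rewrite !expf_eq0 /= !normr_eq0 => /andP[/eqP -> /eqP ->].
Qed.

Lemma realpt_coords (v : 'rV[C]_4) :
  [/\ realpt v ~6 0 = v ~4 0 * cj (v ~4 0) + v ~4 1 * cj (v ~4 1),
      realpt v ~6 1 = - v ~4 0 * cj (v ~4 3) + v ~4 2 * cj (v ~4 1),
      realpt v ~6 2 = v ~4 0 * cj (v ~4 2) + v ~4 3 * cj (v ~4 1),
      realpt v ~6 3 = - v ~4 1 * cj (v ~4 3) - v ~4 2 * cj (v ~4 0) &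
      realpt v ~6 4 = v ~4 1 * cj (v ~4 2) - v ~4 3 * cj (v ~4 0)] /\
  realpt v ~6 5 = v ~4 2 * cj (v ~4 2) + v ~4 3 * cj (v ~4 3).
Proof.
have val_inord n k : (k < n.+1)%N -> \val (@inord n k) = k := @inordK n k.
by rewrite /realpt /wedge /rightj /plA /plB !mxE !val_inord //=; split; [split|]; ring.
Qed.

Definition polar (x y : 'rV[C]_6) : C :=
  x ~6 0 * y ~6 5 + x ~6 5 * y ~6 0 - x ~6 1 * y ~6 4 - x ~6 4 * y ~6 1
  + x ~6 2 * y ~6 3 + x ~6 3 * y ~6 2.

Lemma polarC x y : polar x y = polar y x.
Proof. by rewrite /polar; ring. Qed.

Lemma polar_diag x : polar x x = 2 * plq x.
Proof. by rewrite /polar /plq; ring. Qed.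

Lemma polar_diag0 x : plq x = 0 -> polar x x = 0.
Proof. by rewrite polar_diag => ->; rewrite mulr0. Qed.

Lemma polarZr (k : C) x y : polar x (k *: y) = k * polar x y.
Proof. by rewrite /polar !mxE; ring. Qed.

Lemma polarDl (s t : C) x y z : polar (s *: x + t *: y) z = s * polar x z + t * polar y z.
Proof. by rewrite /polar !mxE; ring. Qed.

Lemma polarDr (s t : C) x y z : polar z (s *: x + t *: y) = s * polar z x + t * polar z y.
Proof. by rewrite /polar !mxE; ring. Qed.

Lemma plqD (s t : C) x y :
  plq (s *: x + t *: y) = s ^+ 2 * plq x + t ^+ 2 * plq y + s * t * polar x y.
Proof. by rewrite /plq /polar !mxE; ring. Qed.

(* The shape of the coordinates of a real point; the last equation is
   [plq X = 0] rewritten with the others. *)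
Definition real_coords (X : 'rV[C]_6) :=
  [/\ cj (X ~6 0) = X ~6 0, cj (X ~6 5) = X ~6 5, X ~6 4 = cj (X ~6 1),
      X ~6 3 = - cj (X ~6 2) &
      X ~6 0 * X ~6 5 = X ~6 1 * cj (X ~6 1) + X ~6 2 * cj (X ~6 2)].

Lemma realpt_real_coords (v : 'rV[C]_4) : real_coords (realpt v).
Proof.
rewrite /real_coords; have [[-> -> -> -> ->] ->] := realpt_coords v.
by rewrite ?(rmorphD, rmorphN, rmorphB, rmorphM) /= ?conjCK; split; ring.
Qed.

Lemma realpt_neq0 (v : 'rV[C]_4) : v != 0 ->
  (realpt v ~6 0 != 0) || (realpt v ~6 5 != 0).
Proof.
apply: contraNT; rewrite negb_or !negbK; have [[-> _ _ _ _] ->] := realpt_coords v.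
move=> /andP[/eqP/mul_conj_add_eq0[v0 v1] /eqP/mul_conj_add_eq0[v2 v3]].
by apply/eqP/row4_eq; rewrite ?mxE.
Qed.

Lemma realpt_plq (v : 'rV[C]_4) : plq (realpt v) = 0.
Proof.
rewrite /plq; have [_ _ -> -> ->] := realpt_real_coords v; ring.
Qed.

Lemma real_coords_cap0 X : real_coords X -> X ~6 0 = 0 ->
  [/\ X ~6 1 = 0, X ~6 2 = 0, X ~6 3 = 0 & X ~6 4 = 0].
Proof.
move=> [_ _ -> -> p] X0; move: p; rewrite X0 mul0r => /esym/mul_conj_add_eq0[-> ->].
by rewrite rmorph0 oppr0.
Qed.

(* [X0 * Y0 * polar X Y] is a sum of two squared moduli. *)
Lemma real_polar0_eq_scale_lead X Y : real_coords X -> real_coords Y ->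
  X ~6 0 != 0 -> Y ~6 0 != 0 -> polar X Y = 0 -> exists2 c, c != 0 & Y = c *: X.
Proof.
move=> [sX0 sX5 sX4 sX3 pX] [sY0 sY5 sY4 sY3 pY] nX nY B0.
pose d k := X ~6 0 * Y ~6 k - Y ~6 0 * X ~6 k.
have key : X ~6 0 * Y ~6 0 * polar X Y = d 1 * cj (d 1) + d 2 * cj (d 2).
  rewrite /d !(rmorphB, rmorphM) /= sX0 sY0 /polar sX4 sX3 sY4 sY3.
  transitivity (X ~6 0 ^+ 2 * (Y ~6 0 * Y ~6 5) + Y ~6 0 ^+ 2 * (X ~6 0 * X ~6 5)
    - X ~6 0 * Y ~6 0 * (X ~6 1 * cj (Y ~6 1) + cj (X ~6 1) * Y ~6 1
                        + X ~6 2 * cj (Y ~6 2) + cj (X ~6 2) * Y ~6 2)); first by ring.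
  by rewrite pX pY; ring.
move: key; rewrite B0 mulr0 => /esym/mul_conj_add_eq0[e1 e2].
pose c := Y ~6 0 / X ~6 0.
have cc : cj c = c by rewrite /c rmorphM fmorphV /= sX0 sY0.
exists c; first by rewrite mulf_neq0 ?invr_neq0.
have yk k : d k = 0 -> Y ~6 k = c * X ~6 k.
  by move/eqP; rewrite subr_eq0 => /eqP dk; apply: (mulfI nX); rewrite /c dk; field.
have y0 : Y ~6 0 = c * X ~6 0 by rewrite divfK.
have y1 := yk 1 e1; have y2 := yk 2 e2.
have y3 : Y ~6 3 = c * X ~6 3 by rewrite sY3 sX3 y2 rmorphM /= cc mulrN.
have y4 : Y ~6 4 = c * X ~6 4 by rewrite sY4 sX4 y1 rmorphM /= cc.
apply: row6_eq; rewrite mxE //; apply: (mulfI nY).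
have quad Z : real_coords Z -> Z ~6 0 * Z ~6 5 = Z ~6 1 * Z ~6 4 - Z ~6 2 * Z ~6 3.
  by case=> _ _ -> -> ->; rewrite mulrN opprK.
rewrite quad /=; last by split.
rewrite y1 y2 y3 y4 y0; transitivity (c * c * (X ~6 0 * X ~6 5)); last by ring.
by rewrite quad /=; [ring | split].
Qed.

Lemma real_polar0_eq_scale X Y : real_coords X -> real_coords Y ->
  (X ~6 0 != 0) || (X ~6 5 != 0) -> (Y ~6 0 != 0) || (Y ~6 5 != 0) ->
  polar X Y = 0 -> exists2 c, c != 0 & Y = c *: X.
Proof.
move=> sX sY nX nY B0.
have [x0|x0] := eqVneq (X ~6 0) 0; have [y0|y0] := eqVneq (Y ~6 0) 0;
  last exact: real_polar0_eq_scale_lead.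
- have [x1 x2 x3 x4] := real_coords_cap0 sX x0.
  have [y1 y2 y3 y4] := real_coords_cap0 sY y0.
  move: nX nY; rewrite x0 y0 eqxx /= => x5 y5.
  exists (Y ~6 5 / X ~6 5); first by rewrite mulf_neq0 ?invr_neq0.
  by apply: row6_eq; rewrite mxE ?x0 ?y0 ?x1 ?y1 ?x2 ?y2 ?x3 ?y3 ?x4 ?y4 ?mulr0 ?divfK.
- have [x1 x2 x3 x4] := real_coords_cap0 sX x0.
  move: nX B0; rewrite x0 eqxx /= /polar x0 x1 x2 x3 x4 => x5.
  by move/eqP; rewrite !(mul0r, subr0, add0r, addr0) mulf_eq0 (negbTE x5) (negbTE y0).
- have [y1 y2 y3 y4] := real_coords_cap0 sY y0.
  move: nY B0; rewrite y0 eqxx /= /polar y0 y1 y2 y3 y4 => y5.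
  by move/eqP; rewrite !(mulr0, subr0, add0r, addr0) mulf_eq0 (negbTE x0) (negbTE y5).
Qed.

Lemma polar_realpt_eq0 (v w : 'rV[C]_4) : v != 0 -> w != 0 ->
  polar (realpt v) (realpt w) = 0 -> (realpt v :=: realpt w)%MS.
Proof.
move=> nv nw B0.
have [c cnz ->] := real_polar0_eq_scale (realpt_real_coords v) (realpt_real_coords w)
  (realpt_neq0 nv) (realpt_neq0 nw) B0.
exact/eqmx_sym/eqmx_scale.
Qed.

Lemma polar_realpt_neq0 (v w : 'rV[C]_4) : v != 0 -> w != 0 -> distinctS4 v w ->
  polar (realpt v) (realpt w) != 0.
Proof. by move=> nv nw /negP d; apply/eqP => /(polar_realpt_eq0 nv nw)/eqmxP. Qed.

Definition null_pair (a b : 'rV[C]_6) := [/\ plq a = 0, plq b = 0 & polar a b = 0].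

Lemma null_pair_plq a b s t : null_pair a b -> plq (s *: a + t *: b) = 0.
Proof. by case=> ha hb hab; rewrite plqD ha hb hab !mulr0 !addr0. Qed.

Lemma null_lineP (a b : 'rV[C]_6) :
  null_line (col_mx a b) <-> free2 a b /\ null_pair a b.
Proof.
rewrite free2P; split=> [[r2 nl] | [r2 np]]; last first.
  by split=> // x /span2P[s [t ->]]; exact: null_pair_plq.
have ha : plq a = 0 := nl a (sub_col_mxl a b).
have hb : plq b = 0 := nl b (sub_col_mxr a b).
split=> //; split=> //; have := nl (1 *: a + 1 *: b).
by rewrite /inQ plqD ha hb !mulr0 !add0r !mul1r; apply; apply/span2P; exists 1, 1.
Qed.

Lemma null_line_rowsP (L : 'M[C]_(2, 6)) :
  null_line L <-> free2 (row 0 L) (row 1 L) /\ null_pair (row 0 L) (row 1 L).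
Proof. by rewrite -null_lineP col_mx_rows2. Qed.

Lemma null_line_polar (L : 'M[C]_(2, 6)) x y : null_line L ->
  (x <= L)%MS -> (y <= L)%MS -> polar x y = 0.
Proof.
move=> [_ nl] xL yL; have := nl (1 *: x + 1 *: y).
rewrite /inQ plqD (nl x xL) (nl y yL) !mulr0 !add0r !mul1r; apply.
by apply: addmx_sub; rewrite scale1r.
Qed.

Lemma null_line_realpt_eqmx (L : 'M[C]_(2, 6)) (v w : 'rV[C]_4) :
  null_line L -> v != 0 -> w != 0 -> (realpt v <= L)%MS -> (realpt w <= L)%MS ->
  (realpt v :=: realpt w)%MS.
Proof.
by move=> nL nv nw vL wL; apply: polar_realpt_eq0 => //; exact: null_line_polar nL vL wL.
Qed.

Lemma null_line_sub_eqmx (L M : 'M[C]_(2, 6)) : null_line L -> null_line M ->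
  (L <= M)%MS -> (L :=: M)%MS.
Proof. by move=> [rL _] [rM _] sLM; apply: eqmx_sub_rank sLM _; rewrite rL rM. Qed.

Lemma lines_meetC (L M : 'M[C]_(2, 6)) : lines_meet L M -> lines_meet M L.
Proof. by rewrite /lines_meet capmxC. Qed.

Lemma lines_meet_eqmx (L L' M : 'M[C]_(2, 6)) :
  (L :=: L')%MS -> lines_meet L M -> lines_meet L' M.
Proof. by move=> e; rewrite /lines_meet (cap_eqmx e (eqmx_refl M)). Qed.

Lemma lines_meet_common (L M : 'M[C]_(2, 6)) (x : 'rV[C]_6) :
  x != 0 -> (x <= L)%MS -> (x <= M)%MS -> lines_meet L M.
Proof.
move=> xnz xL xM; rewrite /lines_meet lt0n mxrank_eq0.
by apply: contraNneq xnz => LM0; rewrite -submx0 -LM0 sub_capmx xL xM.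
Qed.

(* [pole p a b] is the point of the line [ab] polar to [p]. *)
Definition pole (p a b : 'rV[C]_6) := polar p b *: a + (- polar p a) *: b.

(* The null line through [p] meeting [L], when [p] is null (see [transfer_unique]). *)
Definition transfer (L : 'M[C]_(2, 6)) (p : 'rV[C]_6) : 'M[C]_(2, 6) :=
  col_mx p (pole p (row 0 L) (row 1 L)).

Lemma polar_pole p a b : polar p (pole p a b) = 0.
Proof. by rewrite polarDr; ring. Qed.

Lemma pole_sub (L : 'M[C]_(2, 6)) p : (pole p (row 0 L) (row 1 L) <= L)%MS.
Proof.
have /span2P : exists s t, pole p (row 0 L) (row 1 L) = s *: row 0 L + t *: row 1 L.
  by do 2!eexists.
by rewrite col_mx_rows2.
Qed.

Lemma transfer_sub L p : (p <= transfer L p)%MS.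
Proof. exact: sub_col_mxl. Qed.

Lemma transfer_subE L p m (M : 'M[C]_(m, 6)) :
  (transfer L p <= M)%MS = (p <= M)%MS && (pole p (row 0 L) (row 1 L) <= M)%MS.
Proof. exact: (@col_mx_sub _ 1 1). Qed.

Lemma pole_sub_transfer L p : (pole p (row 0 L) (row 1 L) <= transfer L p)%MS.
Proof. exact: (@sub_col_mxr _ _ 1 1 p). Qed.

Section Transfer.
Variables (L : 'M[C]_(2, 6)) (q p : 'rV[C]_6).
Hypotheses (nL : null_line L) (qL : (q <= L)%MS) (qp : polar q p != 0).

Lemma pole_neq0 : pole p (row 0 L) (row 1 L) != 0.
Proof.
have [fr _] := (null_line_rowsP L).1 nL.
apply/eqP => /fr[pb pa]; move/eqP: qp; apply.
move: qL; rewrite -(col_mx_rows2 L) => /span2P[s [t ->]].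
by rewrite polarDl !(polarC _ p) pb; move/eqP: pa; rewrite oppr_eq0 => /eqP ->; ring.
Qed.

Lemma transfer_null : plq p = 0 -> null_line (transfer L p).
Proof.
move=> hp; have rL := pole_sub L p; have rnz := pole_neq0.
rewrite /transfer; set r := pole _ _ _ in rL rnz *.
have qr : polar q r = 0 := null_line_polar nL qL rL.
apply/null_lineP; split; last by split; [| exact: (proj2 nL _ rL) | exact: polar_pole].
move=> s t e; have := congr1 (polar q) e.
rewrite polarDr qr mulr0 addr0 [RHS]/polar !mxE !(mulr0, addr0, subr0).
move/eqP; rewrite mulf_eq0 (negbTE qp) orbF => /eqP s0; split=> //.
by move: e; rewrite s0 scale0r add0r => /eqP; rewrite scaler_eq0 (negbTE rnz) orbF => /eqP.
Qed.

Lemma transfer_meet : lines_meet L (transfer L p).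
Proof. exact: lines_meet_common pole_neq0 (pole_sub L p) (pole_sub_transfer L p). Qed.

(* A null line through [p] meeting [L] meets it in a point polar to [p]:
   necessarily [pole p]. *)
Lemma transfer_unique (M : 'M[C]_(2, 6)) : null_line M -> (p <= M)%MS ->
  lines_meet L M -> (M :=: transfer L p)%MS.
Proof.
move=> nM pM meet; apply: eqmx_sym.
apply: (null_line_sub_eqmx (transfer_null (proj2 nM _ pM)) nM).
rewrite transfer_subE pM /=.
have /rowV0Pn[x] : (L :&: M)%MS != 0 by rewrite -mxrank_eq0 -lt0n.
rewrite sub_capmx => /andP[xL xM] xnz.
have xp : polar x p = 0 := null_line_polar nM xM pM.
move: xL xM xp xnz; rewrite -{1}(col_mx_rows2 L) => /span2P[s [t ->]] xM.
rewrite polarDl !(polarC _ p) => rel xnz.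
have [s0|snz] := eqVneq s 0.
  have tnz : t != 0 by apply: contraNneq xnz => t0; rewrite s0 t0 !scale0r addr0.
  move: rel; rewrite s0 mul0r add0r => /eqP; rewrite mulf_eq0 (negbTE tnz) /= => /eqP pb.
  rewrite (_ : pole _ _ _ = (- polar p (row 0 L) / t) *: (s *: row 0 L + t *: row 1 L)).
    exact: scalemx_sub.
  by rewrite /pole pb s0 !scale0r !add0r scalerA divfK.
rewrite (_ : pole _ _ _ = (polar p (row 1 L) / s) *: (s *: row 0 L + t *: row 1 L)).
  exact: scalemx_sub.
have pa : polar p (row 0 L) = - (t * polar p (row 1 L)) / s.
  by apply: (mulfI snz); rewrite [RHS]mulrC divfK //; apply/eqP; rewrite -addr_eq0 rel.
by rewrite /pole pa; apply/rowP => j; rewrite !mxE; field.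
Qed.

End Transfer.

Definition null_line_through (L : 'M[C]_(2, 6)) (p : 'rV[C]_6) := null_line L /\ (p <= L)%MS.

Lemma transfer_through (L : 'M[C]_(2, 6)) (q p : 'rV[C]_6) : null_line_through L q ->
  plq p = 0 -> polar q p != 0 -> null_line_through (transfer L p) p.
Proof.
by move=> [nL qL] hp qp; split; [exact: transfer_null nL qL qp hp | exact: transfer_sub].
Qed.

Lemma lines_meet_transfer (L M : 'M[C]_(2, 6)) (q p : 'rV[C]_6) :
  null_line_through L q -> polar q p != 0 -> (M :=: transfer L p)%MS -> lines_meet L M.
Proof.
move=> [nL qL] qp e; apply: lines_meetC.
exact: lines_meet_eqmx (eqmx_sym e) (lines_meetC (transfer_meet nL qL qp)).
Qed.

Lemma null_lines_distinct_real_points (L M : 'M[C]_(2, 6)) (v w : 'rV[C]_4) :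
  null_line_through L (realpt v) -> null_line_through M (realpt w) ->
  v != 0 -> w != 0 -> distinctS4 v w -> distinct_real_points L M.
Proof.
move=> [nL vL] [nM wM] nv nw /negP dvw v' w' [nv' v'L] [nw' w'M]; apply/negP => /eqmxP e.
apply/dvw/eqmxP; apply: eqmx_trans (null_line_realpt_eqmx nL nv nv' vL v'L) _.
exact: eqmx_trans e (null_line_realpt_eqmx nM nw' nw w'M wM).
Qed.

Lemma transfer_sym (L M : 'M[C]_(2, 6)) (q p : 'rV[C]_6) :
  null_line_through L q -> null_line_through M p -> polar q p != 0 ->
  (M :=: transfer L p)%MS -> (L :=: transfer M q)%MS.
Proof.
move=> tL [nM pM] qp e; have pq : polar p q != 0 by rewrite polarC.
apply: (transfer_unique nM pM pq tL.1 tL.2).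
exact/lines_meetC/(lines_meet_transfer tL qp e).
Qed.

Lemma transfer_eqmx (L L' : 'M[C]_(2, 6)) (q p : 'rV[C]_6) :
  null_line_through L q -> null_line_through L' q -> plq p = 0 -> polar q p != 0 ->
  (L :=: L')%MS -> (transfer L p :=: transfer L' p)%MS.
Proof.
move=> [nL qL] [nL' qL'] hp qp e; apply/eqmx_sym/(transfer_unique nL qL qp).
- exact: transfer_null nL' qL' qp hp.
- exact: transfer_sub.
by apply: lines_meet_eqmx (eqmx_sym e) (transfer_meet nL' qL' qp).
Qed.

Lemma transfer_eqmx_next (L M L' M' : 'M[C]_(2, 6)) (q p : 'rV[C]_6) :
  null_line_through L q -> polar q p != 0 -> (M :=: transfer L p)%MS ->
  null_line_through M' p -> lines_meet L' M' -> (L' :=: L)%MS -> (M' :=: M)%MS.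
Proof.
move=> [nL qL] qp eM [nM' pM'] meet eL; apply: eqmx_trans (eqmx_sym eM).
exact: (transfer_unique nL qL qp nM' pM' (lines_meet_eqmx eL meet)).
Qed.

Lemma transfer_eqmx_iff (L M L' M' : 'M[C]_(2, 6)) (q p : 'rV[C]_6) :
  null_line_through L q -> null_line_through M p -> polar q p != 0 ->
  (M :=: transfer L p)%MS -> null_line_through L' q -> null_line_through M' p ->
  lines_meet L' M' -> (L' == L)%MS = (M' == M)%MS.
Proof.
move=> tL tM qp eM tL' tM' meet; apply/eqmxP/eqmxP => e.
  exact: transfer_eqmx_next tL qp eM tM' meet e.
have pq : polar p q != 0 by rewrite polarC.
exact: transfer_eqmx_next tM pq (transfer_sym tL tM qp eM) tL' (lines_meetC meet) e.
Qed.

Lemma transfer_rows (L : 'M[C]_(2, 6)) (p : 'rV[C]_6) :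
  row 0 (transfer L p) = p /\ row 1 (transfer L p) = pole p (row 0 L) (row 1 L).
Proof. by apply: (@eq_col_mx _ 1 1); rewrite col_mx_rows2. Qed.

Definition circular_face (p1 p2 p3 p4 : 'rV[C]_6) :=
  [/\ [/\ plq p1 = 0, plq p2 = 0, plq p3 = 0 & plq p4 = 0],
      [/\ polar p1 p2 != 0, polar p1 p3 != 0 & polar p1 p4 != 0],
      [/\ polar p2 p3 != 0, polar p2 p4 != 0 & polar p3 p4 != 0] &
      (\rank (col_mx (col_mx p1 p2) (col_mx p3 p4)) <= 3)%N].

Lemma circular_face_rev (p1 p2 p3 p4 : 'rV[C]_6) :
  circular_face p1 p2 p3 p4 -> circular_face p4 p3 p2 p1.
Proof.
move=> [[h1 h2 h3 h4] [B12 B13 B14] [B23 B24 B34] rk].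
split; [by split | by split; rewrite polarC | by split; rewrite polarC |].
apply: leq_trans rk; apply: mxrankS; rewrite !col_mx_sub.
have sL := sub_col_mxl (col_mx p1 p2) (col_mx p3 p4).
have sR := sub_col_mxr (col_mx p1 p2) (col_mx p3 p4).
rewrite (submx_trans (sub_col_mxl p1 p2) sL) (submx_trans (sub_col_mxr p1 p2) sL).
by rewrite (submx_trans (sub_col_mxr p3 p4) sR) (submx_trans (sub_col_mxl p3 p4) sR).
Qed.

Lemma null_triple_rank (p1 p2 p4 : 'rV[C]_6) :
  plq p1 = 0 -> plq p2 = 0 -> plq p4 = 0 ->
  polar p1 p2 != 0 -> polar p1 p4 != 0 -> polar p2 p4 != 0 ->
  \rank (col_mx (col_mx p1 p2) p4) = 3%N.
Proof.
move=> h1 h2 h4 B12 B14 B24.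
have p1nz : p1 != 0 by apply: contraNneq B12 => ->; rewrite /polar !mxE; apply/eqP; ring.
have n21 : ~~ (p2 <= p1)%MS.
  by apply/negP => /sub_rVP[k e]; move/eqP: B12; apply; rewrite e polarZr polar_diag0 ?mulr0.
have n4 : ~~ (p4 <= col_mx p1 p2)%MS.
  apply/negP => /span2P[s [t e]].
  have : plq p4 = s * t * polar p1 p2 by rewrite {1}e plqD h1 h2 !mulr0 !add0r.
  rewrite h4 => /esym/eqP; rewrite !mulf_eq0 (negbTE B12) orbF => /orP[/eqP s0|/eqP t0].
    by move/eqP: B24; apply; rewrite e s0 scale0r add0r polarZr polar_diag0 ?mulr0.
  by move/eqP: B14; apply; rewrite e t0 scale0r addr0 polarZr polar_diag0 ?mulr0.
by rewrite !rank_col_mx_row // rank_rV p1nz.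
Qed.

Lemma circular_face_decomp (p1 p2 p3 p4 : 'rV[C]_6) :
  circular_face p1 p2 p3 p4 ->
  exists x y z, z != 0 /\ p3 = x *: p1 + y *: p2 + z *: p4.
Proof.
move=> [[h1 h2 h3 h4] [B12 B13 B14] [B23 B24 B34] rk].
set S := col_mx (col_mx p1 p2) p4.
have eS : (S :=: col_mx (col_mx p1 p2) (col_mx p3 p4))%MS.
  apply: eqmx_sub_rank; last by rewrite null_triple_rank.
  rewrite col_mx_sub sub_col_mxl (submx_trans (sub_col_mxr p3 p4)) //.
  exact: sub_col_mxr.
have : (p3 <= S)%MS.
  by rewrite eS (submx_trans (sub_col_mxl p3 p4)) // sub_col_mxr.
move=> /sub_col_mx_rowP[w /span2P[x [y ->]] [z e3]].
exists x, y, z; split=> //; apply/eqP => z0; move: e3; rewrite z0 scale0r addr0 => e3.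
have : plq p3 = x * y * polar p1 p2 by rewrite e3 plqD h1 h2 !mulr0 !add0r.
rewrite h3 => /esym/eqP; rewrite !mulf_eq0 (negbTE B12) orbF => /orP[/eqP x0|/eqP y0].
  by move/eqP: B23; apply; rewrite e3 x0 scale0r add0r polarZr polar_diag0 ?mulr0.
by move/eqP: B13; apply; rewrite e3 y0 scale0r addr0 polarZr polar_diag0 ?mulr0.
Qed.

Lemma polar_comb4 (a b u v : 'rV[C]_6) (k1 k2 k3 k4 l1 l2 l3 l4 : C) :
  polar (k1 *: a + k2 *: b + k3 *: u + k4 *: v) (l1 *: a + l2 *: b + l3 *: u + l4 *: v) =
  k1 * l1 * polar a a + k2 * l2 * polar b b + k3 * l3 * polar u u + k4 * l4 * polar v v
  + (k1 * l2 + k2 * l1) * polar a b + (k1 * l3 + k3 * l1) * polar a u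
  + (k1 * l4 + k4 * l1) * polar a v + (k2 * l3 + k3 * l2) * polar b u
  + (k2 * l4 + k4 * l2) * polar b v + (k3 * l4 + k4 * l3) * polar u v.
Proof. by rewrite /polar !mxE; ring. Qed.

Lemma polar_comb4l (a b u v w : 'rV[C]_6) (k1 k2 k3 k4 : C) :
  polar (k1 *: a + k2 *: b + k3 *: u + k4 *: v) w =
  k1 * polar a w + k2 * polar b w + k3 * polar u w + k4 * polar v w.
Proof. by rewrite /polar !mxE; ring. Qed.

(* The two double poles differ by a multiple of [p3] plus [N *: W], where
   [2 * N = polar p3 p3] vanishes since [p3] is null. *)
Lemma pole_face_identity (a b p2 p3 p4 : 'rV[C]_6) (s t x y z : C) :
  null_pair a b -> plq p2 = 0 -> plq p3 = 0 -> plq p4 = 0 ->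
  p3 = x *: (s *: a + t *: b) + y *: p2 + z *: p4 ->
  z ^+ 2 *: pole p3 p4 (pole p4 a b) = y ^+ 2 *: pole p3 p2 (pole p2 a b)
    - (y * z * (polar b p2 * polar a p4 - polar a p2 * polar b p4)) *: p3.
Proof.
move=> [pa pb Bab] h2 h3 h4 e3.
have Baa := polar_diag0 pa; have Bbb := polar_diag0 pb.
have B22 := polar_diag0 h2; have B44 := polar_diag0 h4.
have E3 : p3 = (x * s) *: a + (x * t) *: b + y *: p2 + z *: p4.
  by rewrite e3; apply/rowP => j; rewrite !mxE; ring.
have Epole u : pole u a b = polar b u *: a + (- polar a u) *: b + 0 *: p2 + 0 *: p4.
  by rewrite /pole (polarC u b) (polarC u a); apply/rowP => j; rewrite !mxE; ring.
set D := polar b p2 * polar a p4 - polar a p2 * polar b p4.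
have k1 : polar p3 (pole p2 a b) = z * D.
  by rewrite E3 Epole polar_comb4 Baa Bbb Bab B22 B44 /D; ring.
have k3 : polar p3 (pole p4 a b) = - (y * D).
  by rewrite E3 Epole polar_comb4 Baa Bbb Bab B22 B44 /D; ring.
have k2 : polar p3 p2 = x * (s * polar a p2 + t * polar b p2) + z * polar p2 p4.
  by rewrite E3 polar_comb4l B22 (polarC p4 p2); ring.
have k4 : polar p3 p4 = x * (s * polar a p4 + t * polar b p4) + y * polar p2 p4.
  by rewrite E3 polar_comb4l B44; ring.
set N := x * y * (s * polar a p2 + t * polar b p2) + x * z * (s * polar a p4 + t * polar b p4)
         + y * z * polar p2 p4.
have N0 : N = 0.
  have : 2 * N = polar p3 p3 by rewrite E3 polar_comb4 Baa Bbb Bab B22 B44 /N; ring.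
  by rewrite polar_diag0 // => /eqP; rewrite mulf_eq0 pnatr_eq0 /= => /eqP.
set W := (z * polar b p4 - y * polar b p2) *: a + (y * polar a p2 - z * polar a p4) *: b.
suff -> : z ^+ 2 *: pole p3 p4 (pole p4 a b) =
          y ^+ 2 *: pole p3 p2 (pole p2 a b) - (y * z * D) *: p3 - N *: W.
  by rewrite N0 scale0r subr0.
rewrite [pole p3 p4 _]/pole [pole p3 p2 _]/pole k1 k2 k3 k4 E3 /W /N /D /pole.
rewrite (polarC p2 b) (polarC p2 a) (polarC p4 b) (polarC p4 a).
by apply/rowP => j; rewrite !mxE; ring.
Qed.

Lemma transfer_span2P (L : 'M[C]_(2, 6)) p x :
  (x <= transfer L p)%MS <-> exists s t, x = s *: p + t *: pole p (row 0 L) (row 1 L).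
Proof. exact: span2P. Qed.

Lemma transfer_face (L : 'M[C]_(2, 6)) (p1 p2 p3 p4 : 'rV[C]_6) :
  circular_face p1 p2 p3 p4 -> null_line_through L p1 ->
  (transfer (transfer L p2) p3 :=: transfer (transfer L p4) p3)%MS.
Proof.
move=> face [nL p1L]; have [[h1 h2 h3 h4] [B12 B13 B14] [B23 B24 B34] _] := face.
have [x [y [z [znz e3]]]] := circular_face_decomp face.
have nT2 := transfer_null nL p1L B12 h2; have nT4 := transfer_null nL p1L B14 h4.
have B43 : polar p4 p3 != 0 by rewrite polarC.
have nT23 := transfer_null nT2 (transfer_sub L p2) B23 h3.
have nT43 := transfer_null nT4 (transfer_sub L p4) B43 h3.
apply: eqmx_sym; apply: (null_line_sub_eqmx nT43 nT23).
rewrite transfer_subE transfer_sub /=.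
have [r20 r21] := transfer_rows L p2; have [r40 r41] := transfer_rows L p4.
rewrite r40 r41; apply/transfer_span2P; rewrite r20 r21.
have [_ np] := (null_line_rowsP L).1 nL.
move: p1L; rewrite -{1}(col_mx_rows2 L) => /span2P[s [t e1]].
have z2 : z ^+ 2 != 0 by rewrite expf_neq0.
rewrite e1 in e3; have := pole_face_identity np h2 h3 h4 e3.
set Q2 := pole p3 p2 _; set Q4 := pole p3 p4 _; set c := y * z * _ => id.
exists (- c / z ^+ 2), (y ^+ 2 / z ^+ 2).
rewrite -[Q4](scalerK z2) id scalerBr !scalerA addrC -scaleNr !(mulrC _^-1) mulNr.
by congr (_ + _).
Qed.

Section Chain.
Variables (L : 'M[C]_(2, 6)) (f : int -> 'rV[C]_6).

Fixpoint chain_pos k := if k is k'.+1 then transfer (chain_pos k') (f k'.+1) else L.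
Fixpoint chain_neg k := if k is k'.+1 then transfer (chain_neg k') (f (Negz k')) else L.

Definition chain (m : int) :=
  match m with Posz k => chain_pos k | Negz k => chain_neg k.+1 end.

Lemma chain_negE k : chain (Negz k + 1) = chain_neg k.
Proof. by case: k => [|k]; rewrite ?NegzS_add1. Qed.

Hypotheses (tL : null_line_through L (f 0)) (hf : forall m, plq (f m) = 0).
Hypothesis hB : forall m, polar (f m) (f (m + 1)) != 0.

Lemma chain_through m : null_line_through (chain m) (f m).
Proof.
case: m => k.
  elim: k => // k tk; apply: transfer_through tk (hf _) _.
  by rewrite (_ : k.+1%:Z = k%:Z + 1) //; lia.
elim: k => [|k tk] /=.
  by apply: transfer_through tL (hf _) _; rewrite polarC; exact: hB (Negz 0).
by apply: transfer_through tk (hf _) _; have := hB (Negz k.+1); rewrite NegzS_add1 polarC.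
Qed.

Lemma chain_succ m : (chain (m + 1) :=: transfer (chain m) (f (m + 1)))%MS.
Proof.
case: m => k; first by rewrite (_ : k%:Z + 1 = k.+1); [exact: eqmx_refl | lia].
have hBk := hB (Negz k); rewrite polarC in hBk.
apply: transfer_sym (chain_through _) (chain_through _) hBk _.
by rewrite /= -chain_negE; exact: eqmx_refl.
Qed.

End Chain.

Section CircularNet.
Variable phi : int -> int -> 'rV[C]_4.
Hypothesis circ : circular_net phi.
Variable L0 : 'M[C]_(2, 6).
Hypothesis tL0 : null_line_through L0 (realpt (phi 0 0)).

Local Notation P m n := (realpt (phi m n)).

Lemma net_face m n : circular_face (P m n) (P (m + 1) n) (P (m + 1) (n + 1)) (P m (n + 1)).
Proof.
have [nz /(_ m n)[[[dab dac dad] [dbc dbd dcd]] cop]] := circ.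
split=> //; first by split; apply: realpt_plq.
  by split; apply: polar_realpt_neq0; rewrite ?nz.
by split; apply: polar_realpt_neq0; rewrite ?nz.
Qed.

Lemma polar_net_right m n : polar (P m n) (P (m + 1) n) != 0.
Proof. by have [_ [] ] := net_face m n. Qed.

Lemma polar_net_up m n : polar (P m n) (P m (n + 1)) != 0.
Proof. by have [_ [] ] := net_face m n. Qed.

Definition column m := chain L0 (fun k => P k 0) m.

Definition net m n := chain (column m) (fun k => P m k) n.

Lemma column_through m : null_line_through (column m) (P m 0).
Proof.
exact: (@chain_through _ (fun k => P k 0) tL0 (fun k => realpt_plq _)
          (fun k => polar_net_right k 0) m).
Qed.

Lemma net_through m n : null_line_through (net m n) (P m n).
Proof.
exact: (@chain_through _ (fun k => P m k) (column_through m) (fun k => realpt_plq _)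
          (polar_net_up m) n).
Qed.

Lemma net_up m n : (net m (n + 1) :=: transfer (net m n) (P m (n + 1)))%MS.
Proof.
exact: (@chain_succ _ (fun k => P m k) (column_through m) (fun k => realpt_plq _)
          (polar_net_up m) n).
Qed.

Lemma net_down m n : (net m n :=: transfer (net m (n + 1)) (P m n))%MS.
Proof.
exact: transfer_sym (net_through m n) (net_through m (n + 1)) (polar_net_up m n) (net_up m n).
Qed.

(* Going up the column [m + 1] agrees with going across from column [m],
   because transfers commute around each circular face. *)
Lemma net_right m n : (net (m + 1) n :=: transfer (net m n) (P (m + 1) n))%MS.
Proof.
elim/int_succ_rect: n => [|n IH|n IH].
- exact: (@chain_succ _ (fun k => P k 0) tL0 (fun k => realpt_plq _)
            (fun k => polar_net_right k 0) m).
- have t1 := transfer_through (net_through m n) (realpt_plq _) (polar_net_right m n).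
  have t2 := transfer_through (net_through m n) (realpt_plq _) (polar_net_up m n).
  apply: eqmx_trans (net_up (m + 1) n) _.
  apply: eqmx_trans (transfer_eqmx (net_through (m + 1) n) t1 (realpt_plq _)
                       (polar_net_up (m + 1) n) IH) _.
  apply: eqmx_trans (transfer_face (net_face m n) (net_through m n)) _.
  exact: transfer_eqmx t2 (net_through m (n + 1)) (realpt_plq _)
           (polar_net_right m (n + 1)) (eqmx_sym (net_up m n)).
- have pd : polar (P m (n + 1)) (P m n) != 0 by rewrite polarC polar_net_up.
  have pd' : polar (P (m + 1) (n + 1)) (P (m + 1) n) != 0 by rewrite polarC polar_net_up.
  have t1 := transfer_through (net_through m (n + 1)) (realpt_plq _)
                (polar_net_right m (n + 1)).
  have t2 := transfer_through (net_through m (n + 1)) (realpt_plq _) pd.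
  apply: eqmx_trans (net_down (m + 1) n) _.
  apply: eqmx_trans (transfer_eqmx (net_through (m + 1) (n + 1)) t1 (realpt_plq _) pd' IH) _.
  apply: eqmx_trans (transfer_face (circular_face_rev (net_face m n))
                       (net_through m (n + 1))) _.
  exact: transfer_eqmx t2 (net_through m n) (realpt_plq _)
           (polar_net_right m n) (eqmx_sym (net_down m n)).
Qed.

Lemma net_principal : principal_contact_element_net net.
Proof.
move=> m n; have [nz /(_ m n)[[[dab _ dad] _] _]] := circ.
have [nL pL] := net_through m n.
split.
- by split=> //; exists (phi m n).
- exact: null_lines_distinct_real_points (net_through m n) (net_through (m + 1) n)
           (nz _ _) (nz _ _) dab.
- exact: null_lines_distinct_real_points (net_through m n) (net_through m (n + 1))
           (nz _ _) (nz _ _) dad.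
- exact: lines_meet_transfer (net_through m n) (polar_net_right m n) (net_right m n).
- exact: lines_meet_transfer (net_through m n) (polar_net_up m n) (net_up m n).
Qed.

Lemma net_unique (Psi : int -> int -> 'M[C]_(2, 6)) :
  principal_contact_element_net Psi -> congruent Psi phi -> (Psi 0 0 == L0)%MS ->
  forall m n, (Psi m n == net m n)%MS.
Proof.
move=> pPsi cPsi e00.
have tPsi m n : null_line_through (Psi m n) (P m n).
  by have [[nl _] _ _ _ _] := pPsi m n; split.
have right m n : (Psi m n == net m n)%MS = (Psi (m + 1)%R n == net (m + 1)%R n)%MS.
  have [_ _ _ meet _] := pPsi m n.
  exact: transfer_eqmx_iff (net_through m n) (net_through (m + 1) n) (polar_net_right m n)
           (net_right m n) (tPsi m n) (tPsi (m + 1) n) meet.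
have up m n : (Psi m n == net m n)%MS = (Psi m (n + 1)%R == net m (n + 1)%R)%MS.
  have [_ _ _ _ meet] := pPsi m n.
  exact: transfer_eqmx_iff (net_through m n) (net_through m (n + 1)) (polar_net_up m n)
           (net_up m n) (tPsi m n) (tPsi m (n + 1)) meet.
have col m : (Psi m 0 == net m 0)%MS.
  elim/int_succ_rect: m => [|m IH|m IH]; first exact: e00.
    by rewrite -(right m 0).
  by rewrite (right m 0).
move=> m; elim/int_succ_rect => [|n IH|n IH]; first exact: col.
  by rewrite -(up m n).
by rewrite (up m n).
Qed.

End CircularNet.

End Twistor.

Theorem mainTheorem2 (R : realType) (phi : int -> int -> 'rV[R[i]]_4) :
  circular_net phi ->
  forall L0 : 'M[R[i]]_(2,6),
    contact_element L0 -> (realpt (phi 0 0) <= L0)%MS ->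
    exists Phi : int -> int -> 'M[R[i]]_(2,6),
      [/\ principal_contact_element_net Phi,
          congruent Phi phi,
          (Phi 0 0 == L0)%MS
        & forall Psi : int -> int -> 'M[R[i]]_(2,6),
            principal_contact_element_net Psi -> congruent Psi phi ->
            (Psi 0 0 == L0)%MS -> forall m n, (Psi m n == Phi m n)%MS].
Proof.
move=> circ L0 [nL0 _] p0L0.
have tL0 : null_line_through L0 (realpt (phi 0 0)) by [].
exists (net phi L0); split.
- exact: (net_principal circ tL0).
- by move=> m n; have [] := net_through circ tL0 m n.
- by apply/eqmxP; exact: eqmx_refl.
- exact: (net_unique circ tL0).
Qed.
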